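(* Let $(N,J,h)$ be a 2-dimensional almost Norden manifold and let $(\mathcal{C}(N),\varphi,\xi,\eta,g)$ be the cone over it (constructed as in the context). Then $(\mathcal{C}(N),\varphi,\xi,\eta,g)$ (1) belongs to the class $\mathcal{F}_1\oplus\mathcal{F}_5$; (2) belongs to $\mathcal{F}_5$ if and only if $(N,J,h)$ is a $\mathcal{W}_0$-manifold (i.e. a K\''ahler-Norden manifold, $\nabla'J=0$); (3) cannot belong to $\mathcal{F}_1$.
   Context: An almost Norden manifold $(N,J,h)$ is a manifold $N$ with an almost complex structure $J$ and a pseudo-Riemannian metric $h$ satisfying $h(Jx,Jy)=-h(x,y)$; $\nabla'$ is its Levi-Civita connection, and $\mathcal{W}_0$ is the class of K\''ahler-Norden manifolds, defined by $\nabla'J=0$. The cone is $\mathcal{C}(N)=\mathbb{R}^+\times N$, $t$ the coordinate on $\mathbb{R}^+=(0,\infty)$, with metric $g=t^2h+\mathrm{d}t^2$ and structure $\xi=\tfrac{\mathrm{d}}{\mathrm{d}t}$, $\eta=\mathrm{d}t$, $\varphi=J$ on vectors tangent to $N$, $\varphi\xi=0$; it is a 3-dimensional almost contact B-metric manifold ($\varphi\xi=0$, $\varphi^2=-\mathrm{Id}+\eta\otimes\xi$, $\eta\circ\varphi=0$, $\eta(\xi)=1$, $g(\varphi x,\varphi y)=-g(x,y)+\eta(x)\eta(y)$). Let $\nabla$ be the Levi-Civita connection of $g$ and $F(x,y,z)=g((\nabla_x\varphi)y,z)$. The Lee forms are $\theta(z)=g^{ij}F(e_i,e_j,z)$ and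 $\theta^*(z)=g^{ij}F(e_i,\varphi e_j,z)$ for a basis $\{e_i\}$. For a $(2n+1)$-dimensional almost contact B-metric manifold (here $n=1$), the Ganchev-Mihova-Gribachev classes used are: $\mathcal{F}_1$: $F(x,y,z)=\frac{1}{2n}\{g(x,\varphi y)\theta(\varphi z)+g(x,\varphi z)\theta(\varphi y)+g(\varphi x,\varphi y)\theta(\varphi^2z)+g(\varphi x,\varphi z)\theta(\varphi^2y)\}$; $\mathcal{F}_5$: $F(x,y,z)=-\frac{\theta^*(\xi)}{2n}\{g(x,\varphi y)\eta(z)+g(x,\varphi z)\eta(y)\}$. The manifold belongs to $\mathcal{F}_1\oplus\mathcal{F}_5$ if $F$ equals the sum of the right-hand sides of these two expressions. *)

From Stdlib Require Import Reals Lra.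
From Coquelicot Require Import Coquelicot.
Open Scope R_scope.

Fixpoint sumn (n : nat) (f : nat -> R) : R :=
  match n with O => 0 | S m => sumn m f + f m end.

Definition upd (p : nat -> R) (i : nat) (s : R) : nat -> R :=
  fun k => if Nat.eqb k i then s else p k.

Definition pd (i : nat) (f : (nat -> R) -> R) (p : nat -> R) : R :=
  Derive (fun s => f (upd p i s)) (p i).

Definition delta (i j : nat) : R := if Nat.eqb i j then 1 else 0.

(* a (0,2) or (1,1) tensor field in coordinates: component i j at point p *)
Definition field := nat -> nat -> (nat -> R) -> R.

Definition det2 (m : field) p := m 0%nat 0%nat p * m 1%nat 1%nat p - m 0%nat 1%nat p * m 1%nat 0%nat p.
Definition inv2 (m : field) : field := fun i j p =>
  match i, j with
  | 0%nat, 0%nat => m 1%nat 1%nat p / det2 m p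
  | 0%nat, 1%nat => - m 0%nat 1%nat p / det2 m p
  | 1%nat, 0%nat => - m 1%nat 0%nat p / det2 m p
  | _, _ => m 0%nat 0%nat p / det2 m p
  end.

(* inverse of a 3x3 matrix field (adjugate / determinant, cyclic cofactors) *)
Definition m3 (k : nat) : nat := Nat.modulo k 3.
Definition cof3 (m : field) (i j : nat) p :=
  m (m3 (i+1)) (m3 (j+1)) p * m (m3 (i+2)) (m3 (j+2)) p
  - m (m3 (i+1)) (m3 (j+2)) p * m (m3 (i+2)) (m3 (j+1)) p.
Definition det3 (m : field) p := sumn 3 (fun j => m 0%nat j p * cof3 m 0%nat j p).
Definition inv3 (m : field) : field := fun i j p => cof3 m j i p / det3 m p.

Definition christoffel (n : nat) (g ginv : field) (k i j : nat) p : R :=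
  / 2 * sumn n (fun l => ginv k l p *
     (pd i (g j l) p + pd j (g i l) p - pd l (g i j) p)).

(* components of the covariant derivative of a (1,1)-tensor A:
   (nabla_{d_i} A)(d_j) = sum_k covD n g ginv A i k j . d_k *)
Definition covD (n : nat) (g ginv A : field) (i k j : nat) p : R :=
  pd i (A k j) p
  + sumn n (fun m => christoffel n g ginv k i m p * A m j p)
  - sumn n (fun m => A k m p * christoffel n g ginv m i j p).

(* N is given by a chart domain U (open in R^2), metric components
   h a b (u1,u2) and components J a b (u1,u2) with J(d_b) = sum_a J a b d_a,
   for a b in {0,1}. *)

Definition open2 (U : R -> R -> Prop) : Prop :=
  forall u1 u2, U u1 u2 -> exists eps, 0 < eps /\
    forall v1 v2, Rabs (v1 - u1) < eps -> Rabs (v2 - u2) < eps -> U v1 v2.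

Definition hN (h : nat -> nat -> R -> R -> R) : field :=
  fun a b p => h a b (p 0%nat) (p 1%nat).

Definition almost_norden2 (U : R -> R -> Prop) (h J : nat -> nat -> R -> R -> R) : Prop :=
  forall u1 u2, U u1 u2 ->
    (forall a b, (a < 2)%nat -> (b < 2)%nat ->
       ex_derive (fun s => h a b s u2) u1 /\ ex_derive (fun s => h a b u1 s) u2 /\
       ex_derive (fun s => J a b s u2) u1 /\ ex_derive (fun s => J a b u1 s) u2) /\
    (forall a b, (a < 2)%nat -> (b < 2)%nat -> h a b u1 u2 = h b a u1 u2) /\
    h 0%nat 0%nat u1 u2 * h 1%nat 1%nat u1 u2 - h 0%nat 1%nat u1 u2 * h 1%nat 0%nat u1 u2 <> 0 /\
    (forall a b, (a < 2)%nat -> (b < 2)%nat ->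
       sumn 2 (fun c => J a c u1 u2 * J c b u1 u2) = - delta a b) /\
    (forall a b, (a < 2)%nat -> (b < 2)%nat ->
       sumn 2 (fun c => sumn 2 (fun d => h c d u1 u2 * J c a u1 u2 * J d b u1 u2))
       = - h a b u1 u2).

Definition kahler_norden (U : R -> R -> Prop) (h J : nat -> nat -> R -> R -> R) : Prop :=
  forall p : nat -> R, U (p 0%nat) (p 1%nat) ->
    forall i k j, (i < 2)%nat -> (k < 2)%nat -> (j < 2)%nat ->
      covD 2 (hN h) (inv2 (hN h)) (hN J) i k j p = 0.

(* ---------- The cone C(N) = R^+ x N, coordinates (t, u1, u2) = (p0, p1, p2) ---------- *)

Definition gC (h : nat -> nat -> R -> R -> R) : field := fun i j p =>
  match i, j with
  | 0%nat, 0%nat => 1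
  | 0%nat, _ => 0
  | _, 0%nat => 0
  | S a, S b => (p 0%nat) ^ 2 * h a b (p 1%nat) (p 2%nat)
  end.

Definition phiC (J : nat -> nat -> R -> R -> R) : field := fun i j p =>
  match i, j with
  | 0%nat, _ => 0
  | _, 0%nat => 0
  | S a, S b => J a b (p 1%nat) (p 2%nat)
  end.

Section Cone.
Variables (h J : nat -> nat -> R -> R -> R).

Definition g3 := gC h.
Definition g3inv := inv3 (gC h).
Definition phi3 := phiC J.

Definition gv (x y : nat -> R) p := sumn 3 (fun i => sumn 3 (fun j => g3 i j p * x i * y j)).
Definition phiv (x : nat -> R) p : nat -> R := fun k => sumn 3 (fun j => phi3 k j p * x j).
Definition eta (x : nat -> R) : R := x 0%nat.
Definition basis (i : nat) : nat -> R := fun k => delta k i.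
Definition xi : nat -> R := basis 0.

(* F(x,y,z) = g((nabla_x phi) y, z) *)
Definition Fc (x y z : nat -> R) p : R :=
  sumn 3 (fun i => sumn 3 (fun j => sumn 3 (fun k => sumn 3 (fun l =>
    x i * y j * z l * g3 k l p * covD 3 g3 g3inv phi3 i k j p)))).

Definition theta (z : nat -> R) p : R :=
  sumn 3 (fun i => sumn 3 (fun j => g3inv i j p * Fc (basis i) (basis j) z p)).
Definition theta_s (z : nat -> R) p : R :=
  sumn 3 (fun i => sumn 3 (fun j => g3inv i j p * Fc (basis i) (phiv (basis j) p) z p)).

(* right-hand sides of the class conditions, with n = 1 (dim 2n+1 = 3) *)
Definition F1rhs (x y z : nat -> R) p : R :=
  / 2 * ( gv x (phiv y p) p * theta (phiv z p) p
        + gv x (phiv z p) p * theta (phiv y p) p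
        + gv (phiv x p) (phiv y p) p * theta (phiv (phiv z p) p) p
        + gv (phiv x p) (phiv z p) p * theta (phiv (phiv y p) p) p).
Definition F5rhs (x y z : nat -> R) p : R :=
  - (theta_s xi p / 2) * (gv x (phiv y p) p * eta z + gv x (phiv z p) p * eta y).

End Cone.

Definition cone_point (U : R -> R -> Prop) (p : nat -> R) : Prop :=
  0 < p 0%nat /\ U (p 1%nat) (p 2%nat).

Definition cone_in_F1 U h J : Prop :=
  forall p, cone_point U p -> forall x y z, Fc h J x y z p = F1rhs h J x y z p.
Definition cone_in_F5 U h J : Prop :=
  forall p, cone_point U p -> forall x y z, Fc h J x y z p = F5rhs h J x y z p.
Definition cone_in_F1F5 U h J : Prop :=
  forall p, cone_point U p -> forall x y z,
    Fc h J x y z p = F1rhs h J x y z p + F5rhs h J x y z p.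

(* On the cone, with t the radial coordinate and x' the N-component of x,
     F(x,y,z) = -t (η(z) h(x',Jy') + η(y) h(Jx',z')) + t^2 F'(x',y',z'),
   where F' is the structure tensor of N.  Since θ*(ξ) = 2/t the first summand is the F_5-part,
   and the Lee form of the cone restricts to that of N, so the F_1-part is t^2 times the
   W_1-expression of N.  Every 2-dimensional almost Norden manifold is in W_1: differentiating
   the Norden identities shows that F'(a,.,.) is a multiple of one fixed symmetric matrix.
   This gives (1); hence the cone is in F_5 iff F' = 0, i.e. iff N is Kaehler-Norden, and it is
   never in F_1 because F(x,y,ξ) = -t h(x,Jy) is a nondegenerate form on N. *)

From Stdlib Require Import Reals Lra Field Lia FunctionalExtensionality.
From Coquelicot Require Import Coquelicot.
Open Scope R_scope.

Ltac index2_cases i :=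
  let E := fresh in
  assert (E : (i = 0 \/ i = 1)%nat) by lia; destruct E as [E|E]; subst i.

Ltac index3_cases i :=
  let E := fresh in
  assert (E : (i = 0 \/ i = 1 \/ i = 2)%nat) by lia; destruct E as [E|[E|E]]; subst i.

Lemma eq_div_of_mul_eq (x e b : R) : b <> 0 -> x * b = e -> x = e / b.
Proof. intros Hb <-. field. exact Hb. Qed.

Section NordenJet.
(* The 1-jet of (N, J, h) at a point: [dH k a b] and [dJ k a b] stand for the partial
   derivatives ∂_k h_ab and ∂_k J^a_b. *)
Variables (H Jm : nat -> nat -> R) (dH dJ : nat -> nat -> nat -> R).

Definition det_H := H 0 0 * H 1 1 - H 0 1 * H 1 0.

Definition H_inv (a b : nat) : R :=
  match a, b with
  | O, O => H 1 1 / det_H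
  | O, S O => - H 0 1 / det_H
  | S O, O => - H 1 0 / det_H
  | _, _ => H 0 0 / det_H
  end.

Definition christoffel_N (k i j : nat) : R :=
  / 2 * sumn 2 (fun l => H_inv k l * (dH i j l + dH j i l - dH l i j)).

Definition nablaJ (i k j : nat) : R :=
  dJ i k j + sumn 2 (fun m => christoffel_N k i m * Jm m j)
  - sumn 2 (fun m => Jm k m * christoffel_N m i j).

(* [F_N a b d] is F'(∂_a, ∂_b, ∂_d) = h((∇'_a J) ∂_b, ∂_d). *)
Definition F_N (a b d : nat) : R := sumn 2 (fun k => H k d * nablaJ a k b).

Definition hv (x y : nat -> R) : R := sumn 2 (fun a => sumn 2 (fun b => x a * H a b * y b)).

Definition Jv (x : nat -> R) : nat -> R := fun a => sumn 2 (fun b => Jm a b * x b).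

Definition F_Nv (x y z : nat -> R) : R :=
  sumn 2 (fun a => sumn 2 (fun b => sumn 2 (fun d => x a * y b * z d * F_N a b d))).

Definition lee_N (z : nat -> R) : R :=
  sumn 2 (fun a => sumn 2 (fun b => H_inv a b * sumn 2 (fun d => z d * F_N a b d))).

(* The W_1 condition for N has the shape of the F_1 condition, with (h, J) for (g, φ). *)
Definition W1_rhs (x y z : nat -> R) : R :=
  / 2 * ( hv x (Jv y) * lee_N (Jv z) + hv x (Jv z) * lee_N (Jv y)
        + hv (Jv x) (Jv y) * lee_N (Jv (Jv z)) + hv (Jv x) (Jv z) * lee_N (Jv (Jv y))).

Definition norden_relations : Prop :=
  Jm 0 0 * Jm 0 0 + Jm 0 1 * Jm 1 0 + 1 = 0 /\
  Jm 0 0 + Jm 1 1 = 0 /\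
  H 0 1 - H 1 0 = 0 /\
  H 0 0 * Jm 0 1 + H 0 1 * Jm 1 1 - H 1 0 * Jm 0 0 - H 1 1 * Jm 1 0 = 0.

Record norden_jet : Prop := {
  J_sq : Jm 0 0 * Jm 0 0 + Jm 0 1 * Jm 1 0 = -1;
  J_trace : Jm 1 1 = - Jm 0 0;
  H_sym : H 1 0 = H 0 1;
  HJ_sym : H 0 0 * Jm 0 1 + H 0 1 * Jm 1 1 = H 1 0 * Jm 0 0 + H 1 1 * Jm 1 0;
  H_nondeg : det_H <> 0;
  dJ_trace : forall k, (k < 2)%nat -> dJ k 1 1 = - dJ k 0 0;
  dJ_sq : forall k, (k < 2)%nat ->
    2 * Jm 0 0 * dJ k 0 0 + dJ k 0 1 * Jm 1 0 + Jm 0 1 * dJ k 1 0 = 0;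
  dH_sym : forall k, (k < 2)%nat -> dH k 1 0 = dH k 0 1;
  dHJ_sym : forall k, (k < 2)%nat ->
    dH k 0 0 * Jm 0 1 + H 0 0 * dJ k 0 1 + dH k 0 1 * Jm 1 1 + H 0 1 * dJ k 1 1
    - dH k 1 0 * Jm 0 0 - H 1 0 * dJ k 0 0 - dH k 1 1 * Jm 1 0 - H 1 1 * dJ k 1 0 = 0 }.

Definition F_N_shape (b d : nat) : R :=
  match b, d with
  | O, O => Jm 1 0
  | S O, S O => - Jm 0 1
  | _, _ => - Jm 0 0
  end.

Lemma hv_Jv_sym x y :
  H 1 0 = H 0 1 -> H 0 0 * Jm 0 1 + H 0 1 * Jm 1 1 = H 1 0 * Jm 0 0 + H 1 1 * Jm 1 0 ->
  hv x (Jv y) = hv (Jv x) y.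
Proof.
intros Hs HJs.
assert (E : hv x (Jv y) - hv (Jv x) y
  = (x 0%nat * y 1%nat - x 1%nat * y 0%nat)
    * (H 0 0 * Jm 0 1 + H 0 1 * Jm 1 1 - H 1 0 * Jm 0 0 - H 1 1 * Jm 1 0))
  by (unfold hv, Jv; cbn [sumn]; rewrite Hs; ring).
rewrite HJs in E. lra.
Qed.

Lemma F_Nv_basis a b d : (a < 2)%nat -> (b < 2)%nat -> (d < 2)%nat ->
  F_Nv (basis a) (basis b) (basis d) = F_N a b d.
Proof.
intros Ha Hb Hd. index2_cases a; index2_cases b; index2_cases d;
  unfold F_Nv, basis, delta; cbn [sumn Nat.eqb]; ring.
Qed.

Lemma F_Nv_eq0 x y z :
  (forall a b d, (a < 2)%nat -> (b < 2)%nat -> (d < 2)%nat -> F_N a b d = 0) ->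
  F_Nv x y z = 0.
Proof. intros F0. unfold F_Nv; cbn [sumn]. rewrite !F0 by lia. ring. Qed.

Lemma nablaJ_eq0 i k j : det_H <> 0 ->
  (forall a b d, (a < 2)%nat -> (b < 2)%nat -> (d < 2)%nat -> F_N a b d = 0) ->
  (i < 2)%nat -> (k < 2)%nat -> (j < 2)%nat -> nablaJ i k j = 0.
Proof.
intros Hdet F0 Hi Hk Hj.
apply (Rmult_eq_reg_l det_H); [rewrite Rmult_0_r | exact Hdet].
index2_cases k.
- transitivity (H 1 1 * F_N i j 0 - H 1 0 * F_N i j 1).
  + unfold F_N, det_H; cbn [sumn]; ring.
  + rewrite !F0 by lia. ring.
- transitivity (H 0 0 * F_N i j 1 - H 0 1 * F_N i j 0).
  + unfold F_N, det_H; cbn [sumn]; ring.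
  + rewrite !F0 by lia. ring.
Qed.

Hypothesis jet : norden_jet.

Lemma J01_neq0 : Jm 0 1 <> 0.
Proof. intro E. assert (S := J_sq jet). rewrite E in S. nra. Qed.

Lemma J10_eq : Jm 1 0 = -(1 + Jm 0 0 * Jm 0 0) / Jm 0 1.
Proof. apply eq_div_of_mul_eq; [exact J01_neq0 | assert (S := J_sq jet); lra]. Qed.

Lemma H00_eq : H 0 0 = (2 * Jm 0 0 * H 0 1 + H 1 1 * Jm 1 0) / Jm 0 1.
Proof.
apply eq_div_of_mul_eq; [exact J01_neq0|].
assert (S := HJ_sym jet). rewrite (J_trace jet), (H_sym jet) in S. lra.
Qed.

Lemma det_H_reduced_neq0 :
  (2 * Jm 0 0 * H 0 1 * Jm 0 1 + H 1 1 * - (1 + Jm 0 0 * Jm 0 0)) * H 1 1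
  - H 0 1 * H 0 1 * (Jm 0 1 * Jm 0 1) <> 0.
Proof.
intro Z. apply (H_nondeg jet).
apply (Rmult_eq_reg_l (Jm 0 1 * Jm 0 1));
  [| apply Rmult_integral_contrapositive; split; exact J01_neq0].
unfold det_H. rewrite (H_sym jet), H00_eq, J10_eq, Rmult_0_r, <- Z.
field. exact J01_neq0.
Qed.

(* Solving the jet relations for [dJ k 1 0] and [dH k 0 0] (possible since J01 <> 0)
   leaves F' with a single free component F_N a 0 0 in each direction a. *)
Lemma F_N_proportional a b d : (a < 2)%nat -> (b < 2)%nat -> (d < 2)%nat ->
  F_N a b d = F_N a 0 0 * F_N_shape b d / Jm 1 0.
Proof.
destruct jet as [_ r2 r3 _ _ dt ds dh dhj].
assert (edJ : forall k, (k < 2)%nat ->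
  dJ k 1 0 = -(2 * Jm 0 0 * dJ k 0 0 + dJ k 0 1 * Jm 1 0) / Jm 0 1).
{ intros k Hk. apply eq_div_of_mul_eq; [exact J01_neq0 | specialize (ds k Hk); lra]. }
assert (edH : forall k, (k < 2)%nat ->
  dH k 0 0 = (2 * dH k 0 1 * Jm 0 0 + 2 * H 0 1 * dJ k 0 0 + dH k 1 1 * Jm 1 0
              + H 1 1 * dJ k 1 0 - H 0 0 * dJ k 0 1) / Jm 0 1).
{ intros k Hk. apply eq_div_of_mul_eq; [exact J01_neq0|].
  specialize (dhj k Hk). rewrite r2, r3, (dt k Hk), (dh k Hk) in dhj. lra. }
intros Ha Hb Hd.
index2_cases a; index2_cases b; index2_cases d;
  cbv beta iota delta [F_N nablaJ christoffel_N H_inv det_H F_N_shape sumn];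
  rewrite ?dt, ?dh, ?edH, ?edJ, ?r2, ?r3 by lia; rewrite ?H00_eq, ?J10_eq;
  field; repeat split; first [exact J01_neq0 | exact det_H_reduced_neq0 | nra].
Qed.

Lemma norden2_in_W1 x y z : F_Nv x y z = W1_rhs x y z.
Proof.
unfold W1_rhs, lee_N, F_Nv, hv, Jv, H_inv, det_H; cbn [sumn].
rewrite (F_N_proportional 0 0 1), (F_N_proportional 0 1 0), (F_N_proportional 0 1 1),
  (F_N_proportional 1 0 1), (F_N_proportional 1 1 0), (F_N_proportional 1 1 1) by lia.
unfold F_N_shape.
set (f0 := F_N 0 0 0). set (f1 := F_N 1 0 0). clearbody f0 f1.
rewrite (J_trace jet), (H_sym jet), H00_eq, J10_eq.
field. repeat split; first [exact J01_neq0 | exact det_H_reduced_neq0 | nra].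
Qed.

Lemma HJ_neq0 : ~ (forall a b, (a < 2)%nat -> (b < 2)%nat -> hv (basis a) (Jv (basis b)) = 0).
Proof.
intros Z.
assert (HJ0 : forall a b, (a < 2)%nat -> (b < 2)%nat -> sumn 2 (fun c => H a c * Jm c b) = 0).
{ intros a b Ha Hb. rewrite <- (Z a b Ha Hb).
  index2_cases a; index2_cases b; unfold hv, Jv, basis, delta; cbn [sumn Nat.eqb]; ring. }
assert (detJ : Jm 0 0 * Jm 1 1 - Jm 0 1 * Jm 1 0 = 1)
  by (rewrite (J_trace jet); assert (S := J_sq jet); lra).
apply (H_nondeg jet). rewrite <- (Rmult_1_r det_H), <- detJ.
transitivity (sumn 2 (fun c => H 0 c * Jm c 0) * sumn 2 (fun c => H 1 c * Jm c 1)
            - sumn 2 (fun c => H 0 c * Jm c 1) * sumn 2 (fun c => H 1 c * Jm c 0)).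
- unfold det_H; cbn [sumn]; ring.
- rewrite !HJ0 by lia. ring.
Qed.

End NordenJet.

Lemma almost_norden2_relations U h J u1 u2 : almost_norden2 U h J -> U u1 u2 ->
  norden_relations (fun a b => h a b u1 u2) (fun a b => J a b u1 u2).
Proof.
intros AN Hu. destruct (AN u1 u2 Hu) as [_ [Hsym [_ [Hsq Hnor]]]].
assert (s01 := Hsym 0%nat 1%nat ltac:(lia) ltac:(lia)).
assert (q00 := Hsq 0%nat 0%nat ltac:(lia) ltac:(lia)).
assert (q01 := Hsq 0%nat 1%nat ltac:(lia) ltac:(lia)).
assert (n00 := Hnor 0%nat 0%nat ltac:(lia) ltac:(lia)).
unfold norden_relations; cbv beta.
unfold delta in q00, q01; simpl in q00, q01, n00.
set (a := J 0%nat 0%nat u1 u2) in *. set (b := J 0%nat 1%nat u1 u2) in *.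
set (c := J 1%nat 0%nat u1 u2) in *. set (d := J 1%nat 1%nat u1 u2) in *.
set (h00 := h 0%nat 0%nat u1 u2) in *. set (h01 := h 0%nat 1%nat u1 u2) in *.
set (h10 := h 1%nat 0%nat u1 u2) in *. set (h11 := h 1%nat 1%nat u1 u2) in *.
assert (b_nz : b <> 0) by (intro E; rewrite E in q00; nra).
assert (c_nz : c <> 0) by (intro E; rewrite E in q00; nra).
assert (tr : a + d = 0) by (apply (Rmult_eq_reg_l b); [lra | exact b_nz]).
repeat split; try lra.
(* h(Je_0, Je_0) = -h_00 turns c times the goal into h00 (a^2 + bc + 1). *)
assert (E : h00 * (a * a + b * c + 1) = 0) by (replace (a * a + b * c + 1) with 0 by lra; ring).
replace d with (- a) in * by lra. rewrite s01 in *.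
apply (Rmult_eq_reg_l c); [lra | exact c_nz].
Qed.

Lemma is_derive_locally_zero (f : R -> R) x l :
  locally x (fun s => f s = 0) -> is_derive f x l -> l = 0.
Proof.
intros Hl Hd. rewrite <- (is_derive_unique f x l Hd).
rewrite (Derive_ext_loc f (fun _ => 0)); [apply Derive_const | exact Hl].
Qed.

Ltac fold_eta := repeat match goal with |- context [Derive (fun y => ?f y) ?x] =>
  change (Derive (fun y => f y) x) with (Derive f x) end.

Section RelationsDerive.
Variables (hh jj : nat -> nat -> R -> R) (x : R).
Local Notation H a b := (hh a b x).
Local Notation Jm a b := (jj a b x).
Local Notation dH a b := (Derive (hh a b) x).
Local Notation dJ a b := (Derive (jj a b) x).

Hypothesis relations_near :
  locally x (fun s => norden_relations (fun a b => hh a b s) (fun a b => jj a b s)).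
Hypothesis derivable :
  forall a b, (a < 2)%nat -> (b < 2)%nat -> ex_derive (hh a b) x /\ ex_derive (jj a b) x.

Lemma norden_relations_derive :
  dJ 1 1 = - dJ 0 0 /\
  2 * Jm 0 0 * dJ 0 0 + dJ 0 1 * Jm 1 0 + Jm 0 1 * dJ 1 0 = 0 /\
  dH 1 0 = dH 0 1 /\
  dH 0 0 * Jm 0 1 + H 0 0 * dJ 0 1 + dH 0 1 * Jm 1 1 + H 0 1 * dJ 1 1
  - dH 1 0 * Jm 0 0 - H 1 0 * dJ 0 0 - dH 1 1 * Jm 1 0 - H 1 1 * dJ 1 0 = 0.
Proof.
destruct (derivable 0 0 ltac:(lia) ltac:(lia)) as [eh00 ej00].
destruct (derivable 0 1 ltac:(lia) ltac:(lia)) as [eh01 ej01].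
destruct (derivable 1 0 ltac:(lia) ltac:(lia)) as [eh10 ej10].
destruct (derivable 1 1 ltac:(lia) ltac:(lia)) as [eh11 ej11].
assert (near : forall P : R -> Prop,
  (forall s, norden_relations (fun a b => hh a b s) (fun a b => jj a b s) -> P s) ->
  locally x P) by (intros P HP; exact (filter_imp _ _ HP relations_near)).
split; [|split; [|split]].
- enough (E : dJ 0 0 + dJ 1 1 = 0) by lra.
  apply (is_derive_locally_zero (fun s => jj 0 0 s + jj 1 1 s) x).
  + apply near. intros s P; unfold norden_relations in P; tauto.
  + auto_derive; [tauto | fold_eta; ring].
- apply (is_derive_locally_zero (fun s => jj 0 0 s * jj 0 0 s + jj 0 1 s * jj 1 0 s + 1) x).
  + apply near. intros s P; unfold norden_relations in P; tauto.
  + auto_derive; [tauto | fold_eta; ring].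
- enough (E : dH 0 1 - dH 1 0 = 0) by lra.
  apply (is_derive_locally_zero (fun s => hh 0 1 s - hh 1 0 s) x).
  + apply near. intros s P; unfold norden_relations in P; tauto.
  + auto_derive; [tauto | fold_eta; ring].
- apply (is_derive_locally_zero (fun s =>
    hh 0 0 s * jj 0 1 s + hh 0 1 s * jj 1 1 s - hh 1 0 s * jj 0 0 s - hh 1 1 s * jj 1 0 s) x).
  + apply near. intros s P; unfold norden_relations in P; tauto.
  + auto_derive; [tauto | fold_eta; ring].
Qed.

End RelationsDerive.

Lemma open2_locally U u1 u2 : open2 U -> U u1 u2 ->
  locally u1 (fun s => U s u2) /\ locally u2 (fun s => U u1 s).
Proof.
intros HO Hu. destruct (HO u1 u2 Hu) as [eps [He HU]].
assert (R0 : forall u, Rabs (u - u) < eps) by (intro u; rewrite Rminus_eq_0, Rabs_R0; exact He).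
split; exists (mkposreal eps He); intros v Bv; simpl in Bv.
- exact (HU v u2 Bv (R0 u2)).
- exact (HU u1 v (R0 u1) Bv).
Qed.

Lemma Derive_sq_scal (c x : R) : Derive (fun s => s ^ 2 * c) x = 2 * x * c.
Proof. apply is_derive_unique. auto_derive; [auto | ring]. Qed.

Definition horiz (x : nat -> R) : nat -> R := fun a => x (S a).

Section ConeGeometry.
Variables (h J : nat -> nat -> R -> R -> R) (p : nat -> R).

Definition h_at (a b : nat) : R := h a b (p 1) (p 2).
Definition J_at (a b : nat) : R := J a b (p 1) (p 2).
Definition dh_at (k a b : nat) : R :=
  match k with
  | O => Derive (fun s => h a b s (p 2)) (p 1)
  | _ => Derive (fun s => h a b (p 1) s) (p 2)
  end.
Definition dJ_at (k a b : nat) : R :=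
  match k with
  | O => Derive (fun s => J a b s (p 2)) (p 1)
  | _ => Derive (fun s => J a b (p 1) s) (p 2)
  end.

Definition cone_metric_pd (i j l : nat) : R :=
  match j, l with
  | S a, S b =>
      match i with
      | O => 2 * p 0 * h_at a b
      | S k => p 0 ^ 2 * dh_at k a b
      end
  | _, _ => 0
  end.

Lemma pd_cone_metric i j l : (i < 3)%nat -> (j < 3)%nat -> (l < 3)%nat ->
  pd i (gC h j l) p = cone_metric_pd i j l.
Proof.
intros Hi Hj Hl. index3_cases i; index3_cases j; index3_cases l;
  unfold pd; cbn [gC upd Nat.eqb cone_metric_pd h_at dh_at];
  first [apply Derive_const | apply Derive_sq_scal | apply Derive_scal].
Qed.

Definition cone_phi_pd (i k j : nat) : R :=
  match k, j, i with
  | S c, S b, S m => dJ_at m c b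
  | _, _, _ => 0
  end.

Lemma pd_cone_phi i k j : (i < 3)%nat -> (k < 3)%nat -> (j < 3)%nat ->
  pd i (phiC J k j) p = cone_phi_pd i k j.
Proof.
intros Hi Hk Hj. index3_cases i; index3_cases k; index3_cases j;
  unfold pd; cbn [phiC upd Nat.eqb cone_phi_pd dJ_at];
  first [apply Derive_const | reflexivity].
Qed.

Hypotheses (t_neq0 : p 0 <> 0) (h_nondeg : det_H h_at <> 0) (h_sym : h_at 1 0 = h_at 0 1).

Definition cone_metric_inv (i j : nat) : R :=
  match i, j with
  | O, O => 1
  | S a, S b => H_inv h_at a b / p 0 ^ 2
  | _, _ => 0
  end.

Lemma inv3_cone_metric i j : (i < 3)%nat -> (j < 3)%nat ->
  inv3 (gC h) i j p = cone_metric_inv i j.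
Proof.
assert (t4_neq0 : p 0 * p 0 * (p 0 * p 0) <> 0)
  by (repeat apply Rmult_integral_contrapositive_currified; exact t_neq0).
unfold det_H, h_at in h_nondeg.
intros Hi Hj. index3_cases i; index3_cases j;
  unfold inv3, det3, cof3, m3; simpl;
  cbv beta iota delta [cone_metric_inv H_inv det_H h_at gC sumn];
  field; repeat split; auto;
  intro Z; apply h_nondeg, (Rmult_eq_reg_l (p 0 * p 0 * (p 0 * p 0))); auto;
  rewrite Rmult_0_r, <- Z; ring.
Qed.

Definition cone_nabla_phi (i k j : nat) : R :=
  match i, k, j with
  | S a, O, S b => - p 0 * sumn 2 (fun c => h_at a c * J_at c b)
  | S a, S c, O => - J_at c a / p 0
  | S a, S c, S b => nablaJ h_at J_at dh_at dJ_at a c b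
  | _, _, _ => 0
  end.

Lemma covD_cone i k j : (i < 3)%nat -> (k < 3)%nat -> (j < 3)%nat ->
  covD 3 (gC h) (inv3 (gC h)) (phiC J) i k j p = cone_nabla_phi i k j.
Proof.
intros Hi Hk Hj.
unfold covD, christoffel. cbn [sumn].
rewrite !pd_cone_metric, !pd_cone_phi, !inv3_cone_metric by lia.
unfold det_H, h_at in h_nondeg. unfold h_at in h_sym.
index3_cases i; index3_cases k; index3_cases j;
  cbv beta iota delta [cone_metric_pd cone_phi_pd cone_metric_inv cone_nabla_phi phiC
                       nablaJ christoffel_N H_inv det_H sumn h_at J_at];
  rewrite ?h_sym; rewrite ?h_sym in h_nondeg; field; repeat split; auto.
Qed.

End ConeGeometry.

Lemma norden_jet_at U h J p : open2 U -> almost_norden2 U h J -> U (p 1%nat) (p 2%nat) ->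
  norden_jet (h_at h p) (J_at J p) (dh_at h p) (dJ_at J p).
Proof.
intros HO AN Hu.
destruct (almost_norden2_relations U h J _ _ AN Hu) as [q1 [q2 [q3 q4]]].
destruct (open2_locally U _ _ HO Hu) as [L1 L2].
destruct (AN _ _ Hu) as [Hex [_ [Hdet _]]].
assert (Hex1 : forall a b, (a < 2)%nat -> (b < 2)%nat ->
  ex_derive (fun s => h a b s (p 2%nat)) (p 1%nat) /\ ex_derive (fun s => J a b s (p 2%nat)) (p 1%nat))
  by (intros a b Ha Hb; destruct (Hex a b Ha Hb) as [? [? [? ?]]]; split; assumption).
assert (Hex2 : forall a b, (a < 2)%nat -> (b < 2)%nat ->
  ex_derive (fun s => h a b (p 1%nat) s) (p 2%nat) /\ ex_derive (fun s => J a b (p 1%nat) s) (p 2%nat))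
  by (intros a b Ha Hb; destruct (Hex a b Ha Hb) as [? [? [? ?]]]; split; assumption).
assert (D1 := norden_relations_derive _ _ _
  (filter_imp _ _ (fun s Us => almost_norden2_relations U h J _ _ AN Us) L1) Hex1).
assert (D2 := norden_relations_derive _ _ _
  (filter_imp _ _ (fun s Us => almost_norden2_relations U h J _ _ AN Us) L2) Hex2).
constructor; unfold h_at, J_at, det_H; try lra.
all: intros k Hk; destruct k as [|[|k]]; [| | lia]; cbn [dh_at dJ_at]; cbv beta in D1, D2; tauto.
Qed.

Lemma covD_N_eq_nablaJ h J p i k j : (i < 2)%nat -> (k < 2)%nat -> (j < 2)%nat ->
  covD 2 (hN h) (inv2 (hN h)) (hN J) i k j (horiz p)
  = nablaJ (h_at h p) (J_at J p) (dh_at h p) (dJ_at J p) i k j.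
Proof. intros Hi Hk Hj. index2_cases i; index2_cases k; index2_cases j; reflexivity. Qed.

Lemma horiz_basis_S a : horiz (basis (S a)) = basis a.
Proof. reflexivity. Qed.

Lemma F5rhs_horizontal h J p a b d : F5rhs h J (basis (S a)) (basis (S b)) (basis (S d)) p = 0.
Proof. unfold F5rhs, eta, basis, delta; cbn [Nat.eqb]. ring. Qed.

Section ConeClasses.
Variables (h J : nat -> nat -> R -> R -> R) (p : nat -> R).
Local Notation H := (h_at h p).
Local Notation Jm := (J_at J p).
Local Notation dH := (dh_at h p).
Local Notation dJ := (dJ_at J p).

Lemma cone_gv x y : gv h x y p = x 0%nat * y 0%nat + p 0 ^ 2 * hv H (horiz x) (horiz y).
Proof. unfold gv, g3, hv, horiz, h_at; cbn [sumn gC]. ring. Qed.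

Lemma phiv_xi_component x : phiv J x p 0 = 0.
Proof. unfold phiv, phi3; cbn [sumn phiC]. ring. Qed.

Lemma horiz_phiv x : horiz (phiv J x p) = Jv Jm (horiz x).
Proof.
apply functional_extensionality; intro a.
unfold horiz, phiv, phi3, Jv, J_at; cbn [sumn phiC]. ring.
Qed.

Hypothesis t_neq0 : p 0 <> 0.
Hypothesis jet : norden_jet H Jm dH dJ.

Lemma cone_F x y z : Fc h J x y z p =
  - p 0 * (z 0%nat * hv H (horiz x) (Jv Jm (horiz y)) + y 0%nat * hv H (Jv Jm (horiz x)) (horiz z))
  + p 0 ^ 2 * F_Nv H Jm dH dJ (horiz x) (horiz y) (horiz z).
Proof.
assert (hd := H_nondeg _ _ _ _ jet). assert (hs := H_sym _ _ _ _ jet).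
unfold Fc, g3, g3inv, phi3. cbn [sumn].
rewrite !covD_cone by first [lia | assumption].
cbv beta iota delta [cone_nabla_phi hv Jv F_Nv F_N horiz sumn gC h_at].
field. exact t_neq0.
Qed.

Lemma cone_theta z : theta h J z p = lee_N H Jm dH dJ (horiz z).
Proof.
assert (hd := H_nondeg _ _ _ _ jet). assert (hs := H_sym _ _ _ _ jet).
unfold theta, g3inv. cbn [sumn].
rewrite !cone_F, !inv3_cone_metric by first [lia | assumption].
unfold det_H in hd.
cbv beta iota delta [cone_metric_inv hv Jv F_Nv lee_N H_inv det_H horiz basis delta sumn Nat.eqb].
rewrite (J_trace _ _ _ _ jet), hs. rewrite hs in hd.
field. split; assumption.
Qed.

Lemma cone_theta_s_xi : theta_s h J xi p = 2 / p 0.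
Proof.
assert (hd := H_nondeg _ _ _ _ jet). assert (hs := H_sym _ _ _ _ jet).
unfold theta_s, g3inv. cbn [sumn].
rewrite !cone_F, !horiz_phiv, !phiv_xi_component, !inv3_cone_metric
  by first [lia | assumption].
unfold det_H in hd.
cbv beta iota delta [cone_metric_inv hv Jv F_Nv H_inv det_H horiz xi basis delta sumn Nat.eqb].
rewrite (J_trace _ _ _ _ jet), hs, (J10_eq _ _ _ _ jet). rewrite hs in hd.
field. repeat split; first [assumption | exact (J01_neq0 _ _ _ _ jet)].
Qed.

Lemma cone_F1rhs x y z :
  F1rhs h J x y z p = p 0 ^ 2 * W1_rhs H Jm dH dJ (horiz x) (horiz y) (horiz z).
Proof.
unfold F1rhs, W1_rhs.
rewrite !cone_theta, !cone_gv, !horiz_phiv, !phiv_xi_component. ring.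
Qed.

Lemma cone_F5rhs x y z : F5rhs h J x y z p
  = - p 0 * (z 0%nat * hv H (horiz x) (Jv Jm (horiz y)) + y 0%nat * hv H (Jv Jm (horiz x)) (horiz z)).
Proof.
unfold F5rhs, eta.
rewrite cone_theta_s_xi, !cone_gv, !horiz_phiv, !phiv_xi_component.
rewrite (hv_Jv_sym _ _ (horiz x) (horiz z) (H_sym _ _ _ _ jet) (HJ_sym _ _ _ _ jet)).
field. exact t_neq0.
Qed.

Lemma cone_F_split x y z : Fc h J x y z p = F1rhs h J x y z p + F5rhs h J x y z p.
Proof. rewrite cone_F, cone_F1rhs, cone_F5rhs, <- (norden2_in_W1 _ _ _ _ jet). ring. Qed.

Lemma cone_F_horizontal a b d :
  Fc h J (basis (S a)) (basis (S b)) (basis (S d)) p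
  = p 0 ^ 2 * F_Nv H Jm dH dJ (basis a) (basis b) (basis d).
Proof. rewrite cone_F, !horiz_basis_S. cbn [basis delta Nat.eqb]. ring. Qed.

Lemma cone_F_xi a b :
  Fc h J (basis (S a)) (basis (S b)) xi p = - p 0 * hv H (basis a) (Jv Jm (basis b)).
Proof.
rewrite cone_F, !horiz_basis_S.
unfold F_Nv; cbn [sumn horiz xi basis delta Nat.eqb]. ring.
Qed.

Lemma cone_F1rhs_xi x y : F1rhs h J x y xi p = 0.
Proof.
rewrite cone_F1rhs, <- (norden2_in_W1 _ _ _ _ jet).
unfold F_Nv, horiz, xi, basis, delta; cbn [sumn Nat.eqb]. ring.
Qed.

End ConeClasses.

Lemma F_N_eq0_of_kahler_norden U h J p : kahler_norden U h J -> U (p 1%nat) (p 2%nat) ->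
  forall a b d, (a < 2)%nat -> (b < 2)%nat -> (d < 2)%nat ->
  F_N (h_at h p) (J_at J p) (dh_at h p) (dJ_at J p) a b d = 0.
Proof.
intros K Hu a b d Ha Hb Hd. unfold F_N; cbn [sumn].
rewrite <- !(covD_N_eq_nablaJ h J p), !K by (lia || exact Hu). ring.
Qed.

Definition cone_lift (q : nat -> R) : nat -> R :=
  fun n => match n with O => 1 | S m => q m end.

Theorem theorem3p3 (U : R -> R -> Prop) (h J : nat -> nat -> R -> R -> R) :
  open2 U -> (exists u1 u2, U u1 u2) -> almost_norden2 U h J ->
  cone_in_F1F5 U h J /\
  (cone_in_F5 U h J <-> kahler_norden U h J) /\
  ~ cone_in_F1 U h J.
Proof.
intros HO [u1 [u2 Hu]] AN.
assert (jet : forall p, U (p 1%nat) (p 2%nat) ->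
  norden_jet (h_at h p) (J_at J p) (dh_at h p) (dJ_at J p))
  by (intros p; apply norden_jet_at; assumption).
assert (lift_point : forall q, U (q 0%nat) (q 1%nat) -> cone_point U (cone_lift q))
  by (intros q Hq; split; [simpl; lra | exact Hq]).
split; [|split; [split|]].
- intros p [Hp Hup] x y z. apply cone_F_split; [lra | exact (jet p Hup)].
- intros F5 q Hq i k j Hi Hk Hj.
  change q with (horiz (cone_lift q)). rewrite covD_N_eq_nablaJ by assumption.
  apply nablaJ_eq0; [exact (H_nondeg _ _ _ _ (jet _ Hq)) | | assumption..].
  intros a b d Ha Hb Hd.
  assert (E := F5 _ (lift_point q Hq) (basis (S a)) (basis (S b)) (basis (S d))).
  rewrite cone_F_horizontal, F5rhs_horizontal, F_Nv_basis in E by (simpl; lra || auto).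
  simpl in E. lra.
- intros K p [Hp Hup] x y z.
  rewrite cone_F, cone_F5rhs, F_Nv_eq0
    by first [lra | exact (jet p Hup) | exact (F_N_eq0_of_kahler_norden U h J p K Hup)].
  ring.
- intro F1.
  set (p := cone_lift (fun n => match n with O => u1 | _ => u2 end)).
  apply (HJ_neq0 _ _ _ _ (jet p Hu)). intros a b Ha Hb.
  assert (E := F1 p (lift_point _ Hu) (basis (S a)) (basis (S b)) xi).
  rewrite cone_F_xi, cone_F1rhs_xi in E by (simpl; lra || exact (jet p Hu)).
  simpl in E. lra.
Qed.
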